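(* Let $c>0$, $N,n,n_1,n_2,a_1,a_2,\varepsilon\in\mathbb{R}$, $D=\{\vec\gamma:\gamma_1^2+\gamma_2^2>0\}$, $\rho=\sqrt{\gamma_1^2+\gamma_2^2}$, $\mathbb{I}=\operatorname{diag}(2c,2c,c)$, let $\vec\mu$ be as follows: $$\mu_1=c\Big(-n\gamma_1-n_1\gamma_1^2+2n_1\gamma_2^2+n_1\gamma_3^2-3n_2\gamma_1\gamma_2+\frac{N\gamma_1}{\rho^{3}}\Big),\quad \mu_2=c\Big(-n\gamma_2+2n_2\gamma_1^2-n_2\gamma_2^2+n_2\gamma_3^2-3n_1\gamma_1\gamma_2+\frac{N\gamma_2}{\rho^{3}}\Big),$$ $$\mu_3=-c\gamma_3\Big(3n+5n_1\gamma_1+5n_2\gamma_2+\frac{N\gamma_3}{\rho}\Big),$$ and $U(\vec\gamma)=c(a_1\gamma_1+a_2\gamma_2)+\frac{\varepsilon}{\rho}-\frac12c\big(n+n_1\gamma_1+n_2\gamma_2+\frac N\rho\big)^2(2\gamma_1^2+2\gamma_2^2+\gamma_3^2)$. Let $$I_2=\vec M\cdot\vec\gamma+c\Big(n+n_1\gamma_1+n_2\gamma_2+\frac{N}{\rho}\Big)(2\gamma_1^2+2\gamma_2^2+\gamma_3^2).$$ (a) If $N\neq0$, then $I_2$ is not a constant of motion of the system $\dot{\vec M}=-\mathbb{I}^{-1}\vec M\times(\vec M+\vec\mu)+\vec\gamma\times\nabla_{\vec\gamma}U$, $\dot{\vec\gamma}=\vec\gamma\times\mathbb{I}^{-1}\vec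 M$ on $\mathbb{R}^3\times D$. (b) Let $\vec\mu'=(\mu_1,\mu_2,\mu_3')$ with $\mu_3'=-c\gamma_3\big(3n+5n_1\gamma_1+5n_2\gamma_2-N\frac{\gamma_3^2+1}{\rho^{3}}\big)$. Then $\vec\mu'=\psi\vec\gamma+\nabla_{\vec\gamma}\varphi$ with $\varphi=c\big(n+n_1\gamma_1+n_2\gamma_2+\frac N\rho\big)(2\gamma_1^2+2\gamma_2^2+\gamma_3^2)$ and $\psi=-c\big(5n+7n_1\gamma_1+7n_2\gamma_2+N\frac{2\rho^2-\gamma_3^2-1}{\rho^3}\big)$; hence $\Pi_{\vec\mu'}$ defines a Poisson bracket on $\mathbb{R}^3\times D$ and $I_2$ is a Casimir function of $\Pi_{\vec\mu'}$.
   Context: Coordinates on $\mathbb{R}^6$ are $(\vec M,\vec\gamma)=(M_1,M_2,M_3,\gamma_1,\gamma_2,\gamma_3)$. For a smooth $\vec\mu=(\mu_1,\mu_2,\mu_3)$ of $(\vec M,\vec\gamma)$, $\Pi_{\vec\mu}$ is the skew-symmetric $6\times6$ matrix $$\Pi_{\vec\mu}=\begin{bmatrix}0&-M_3-\mu_3&M_2+\mu_2&0&-\gamma_3&\gamma_2\\ M_3+\mu_3&0&-M_1-\mu_1&\gamma_3&0&-\gamma_1\\ -M_2-\mu_2&M_1+\mu_1&0&-\gamma_2&\gamma_1&0\\ 0&-\gamma_3&\gamma_2&0&0&0\\ \gamma_3&0&-\gamma_1&0&0&0\\ -\gamma_2&\gamma_1&0&0&0&0\end{bmatrix},$$ it ''defines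 a Poisson bracket'' if $\{f,g\}_{\vec\mu}=(\nabla f)^T\Pi_{\vec\mu}\nabla g$ satisfies the Jacobi identity, and a Casimir function is a smooth $C$ with $\Pi_{\vec\mu}\nabla C=0$. A constant of motion is a function constant along every solution. *)

From Stdlib Require Import Reals.
Open Scope R_scope.

Inductive idx : Type := M1 | M2 | M3 | G1 | G2 | G3.

Definition idx_eqb (i j : idx) : bool :=
  match i, j with
  | M1, M1 | M2, M2 | M3, M3 | G1, G1 | G2, G2 | G3, G3 => true
  | _, _ => false
  end.

Definition State := idx -> R.

Definition upd (p : State) (i : idx) (s : R) : State :=
  fun j => if idx_eqb j i then s else p j.

Definition sum6 (F : idx -> R) : R :=
  F M1 + F M2 + F M3 + F G1 + F G2 + F G3.

Definition partial (f : State -> R) (i : idx) (p : State) (l : R) : Prop :=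
  derivable_pt_lim (fun s => f (upd p i s)) (p i) l.

Definition is_grad (O : State -> Prop) (f : State -> R) (df : State -> idx -> R) : Prop :=
  forall p, O p -> forall i, partial f i p (df p i).

Definition cont_on (O : State -> Prop) (f : State -> R) : Prop :=
  forall p, O p -> forall eps, eps > 0 -> exists delta, delta > 0 /\
    forall q, O q -> (forall i, Rabs (q i - p i) < delta) -> Rabs (f q - f p) < eps.

Fixpoint Ck (O : State -> Prop) (k : nat) (f : State -> R) : Prop :=
  match k with
  | 0%nat => cont_on O f
  | S k' => exists df : State -> idx -> R,
      is_grad O f df /\ forall i, Ck O k' (fun p => df p i)
  end.

Definition smooth (O : State -> Prop) (f : State -> R) : Prop := forall k, Ck O k f.

Definition inD (p : State) : Prop := p G1 ^ 2 + p G2 ^ 2 > 0.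

Definition rho (p : State) : R := sqrt (p G1 ^ 2 + p G2 ^ 2).

Definition Pi (m1 m2 m3 : State -> R) (p : State) (i j : idx) : R :=
  let a1 := p M1 + m1 p in let a2 := p M2 + m2 p in let a3 := p M3 + m3 p in
  let g1 := p G1 in let g2 := p G2 in let g3 := p G3 in
  match i, j with
  | M1, M2 => - a3 | M1, M3 => a2 | M1, G2 => - g3 | M1, G3 => g2
  | M2, M1 => a3 | M2, M3 => - a1 | M2, G1 => g3 | M2, G3 => - g1
  | M3, M1 => - a2 | M3, M2 => a1 | M3, G1 => - g2 | M3, G2 => g1
  | G1, M2 => - g3 | G1, M3 => g2
  | G2, M1 => g3 | G2, M3 => - g1
  | G3, M1 => - g2 | G3, M2 => g1
  | _, _ => 0
  end.

Definition bracket (P : State -> idx -> idx -> R) (df dg : State -> idx -> R) (p : State) : R :=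
  sum6 (fun i => sum6 (fun j => df p i * P p i j * dg p j)).

Definition poisson_on (O : State -> Prop) (P : State -> idx -> idx -> R) : Prop :=
  forall f g h : State -> R, smooth O f -> smooth O g -> smooth O h ->
  forall df dg dh dfg dgh dhf : State -> idx -> R,
    is_grad O f df -> is_grad O g dg -> is_grad O h dh ->
    is_grad O (bracket P df dg) dfg ->
    is_grad O (bracket P dg dh) dgh ->
    is_grad O (bracket P dh df) dhf ->
    forall p, O p ->
      bracket P dfg dh p + bracket P dgh df p + bracket P dhf dg p = 0.

Definition is_casimir (O : State -> Prop) (P : State -> idx -> idx -> R) (C : State -> R) : Prop :=
  smooth O C /\
  forall dC, is_grad O C dC -> forall p, O p -> forall i, sum6 (fun j => P p i j * dC p j) = 0.

Definition is_solution (F : State -> idx -> R) (O : State -> Prop) (a b : R) (X : R -> State) : Prop :=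
  a < b /\ forall t, a < t < b -> O (X t) /\
    forall i, derivable_pt_lim (fun s => X s i) t (F (X t) i).

Definition constant_of_motion (F : State -> idx -> R) (O : State -> Prop) (f : State -> R) : Prop :=
  forall a b X, is_solution F O a b X ->
    forall t s, a < t < b -> a < s < b -> f (X t) = f (X s).

Section Data.
Variables (c N n n1 n2 a1 a2 eps : R).

Definition mu1 (p : State) : R :=
  let g1 := p G1 in let g2 := p G2 in let g3 := p G3 in
  c * (- n * g1 - n1 * g1 ^ 2 + 2 * n1 * g2 ^ 2 + n1 * g3 ^ 2 - 3 * n2 * g1 * g2
       + N * g1 / rho p ^ 3).

Definition mu2 (p : State) : R :=
  let g1 := p G1 in let g2 := p G2 in let g3 := p G3 in
  c * (- n * g2 + 2 * n2 * g1 ^ 2 - n2 * g2 ^ 2 + n2 * g3 ^ 2 - 3 * n1 * g1 * g2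
       + N * g2 / rho p ^ 3).

Definition mu3 (p : State) : R :=
  let g1 := p G1 in let g2 := p G2 in let g3 := p G3 in
  - c * g3 * (3 * n + 5 * n1 * g1 + 5 * n2 * g2 + N * g3 / rho p).

Definition mu3' (p : State) : R :=
  let g1 := p G1 in let g2 := p G2 in let g3 := p G3 in
  - c * g3 * (3 * n + 5 * n1 * g1 + 5 * n2 * g2 - N * (g3 ^ 2 + 1) / rho p ^ 3).

Definition quadI (p : State) : R := 2 * p G1 ^ 2 + 2 * p G2 ^ 2 + p G3 ^ 2.

Definition Ufun (p : State) : R :=
  c * (a1 * p G1 + a2 * p G2) + eps / rho p
  - 1 / 2 * c * (n + n1 * p G1 + n2 * p G2 + N / rho p) ^ 2 * quadI p.

Definition I2 (p : State) : R :=
  p M1 * p G1 + p M2 * p G2 + p M3 * p G3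
  + c * (n + n1 * p G1 + n2 * p G2 + N / rho p) * quadI p.

Definition phi (p : State) : R :=
  c * (n + n1 * p G1 + n2 * p G2 + N / rho p) * quadI p.

Definition psi (p : State) : R :=
  - c * (5 * n + 7 * n1 * p G1 + 7 * n2 * p G2
         + N * (2 * rho p ^ 2 - p G3 ^ 2 - 1) / rho p ^ 3).

(* vector field: Mdot = -(I^-1 M) x (M + mu) + g x gradU,  gdot = g x I^-1 M,
   I = diag(2c,2c,c); gU1,gU2,gU3 are the components of grad_g U. *)
Definition field (gU1 gU2 gU3 : State -> R) (p : State) (i : idx) : R :=
  let w1 := p M1 / (2 * c) in let w2 := p M2 / (2 * c) in let w3 := p M3 / c in
  let b1 := p M1 + mu1 p in let b2 := p M2 + mu2 p in let b3 := p M3 + mu3 p in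
  let g1 := p G1 in let g2 := p G2 in let g3 := p G3 in
  let u1 := gU1 p in let u2 := gU2 p in let u3 := gU3 p in
  match i with
  | M1 => - (w2 * b3 - w3 * b2) + (g2 * u3 - g3 * u2)
  | M2 => - (w3 * b1 - w1 * b3) + (g3 * u1 - g1 * u3)
  | M3 => - (w1 * b2 - w2 * b1) + (g1 * u2 - g2 * u1)
  | G1 => g2 * w3 - g3 * w2
  | G2 => g3 * w1 - g1 * w3
  | G3 => g1 * w2 - g2 * w1
  end.

End Data.

(* (a) Along the vector field, dI2/dt is a rational function of the state; at
   M = (0,1,0), gamma = (1,0,1) it equals 3N/2.  The field is locally Lipschitz, so Picard
   iteration yields a solution through that point, and I2 varies along it.
   (b) Since mu' = psi gamma + grad phi, curl mu' = grad psi x gamma is orthogonal to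
   gamma.  After the Hessian terms cancel (Schwarz), the Jacobi identity for Pi_mu
   reduces to exactly gamma . curl mu = 0.
   Finally Pi_mu' grad I2 = 0 because grad I2 = (gamma, M + mu' - psi gamma). *)

From Stdlib Require Import Reals Lra Lia Psatz Nsatz ClassicalEpsilon FunctionalExtensionality.
(* [Defs] comes last: [Nsatz] also exports a [bracket]. *)
From Pilot Require Import Defs.
Open Scope R_scope.

Lemma idx_eqb_eq i j : idx_eqb i j = true <-> i = j.
Proof. destruct i, j; simpl; split; congruence. Qed.

Lemma idx_eqb_neq i j : i <> j -> idx_eqb i j = false.
Proof. destruct i, j; simpl; congruence. Qed.

Definition idx_eq_dec (i j : idx) : {i = j} + {i <> j}.
Proof. decide equality. Defined.

Lemma upd_eq p i s : upd p i s i = s.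
Proof. unfold upd; destruct i; reflexivity. Qed.

Lemma upd_neq p i j s : j <> i -> upd p i s j = p j.
Proof. intro H; unfold upd; rewrite idx_eqb_neq; auto. Qed.

Lemma upd_id p i : upd p i (p i) = p.
Proof.
  apply functional_extensionality; intro j; unfold upd.
  destruct (idx_eqb j i) eqn:E; [apply idx_eqb_eq in E; subst|]; auto.
Qed.

Lemma upd_upd p i s t : upd (upd p i s) i t = upd p i t.
Proof. apply functional_extensionality; intro j; unfold upd; destruct (idx_eqb j i); auto. Qed.

Lemma upd_comm p i k s t : i <> k -> upd (upd p i s) k t = upd (upd p k t) i s.
Proof.
  intro H; apply functional_extensionality; intro j; unfold upd.
  destruct (idx_eqb j k) eqn:E1, (idx_eqb j i) eqn:E2; auto.
  apply idx_eqb_eq in E1; apply idx_eqb_eq in E2; subst; congruence.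
Qed.

Lemma sum6_ext F G : (forall j, F j = G j) -> sum6 F = sum6 G.
Proof. intro H; unfold sum6; rewrite !H; reflexivity. Qed.

Lemma Rabs_le_inv x a : Rabs x <= a -> - a <= x <= a.
Proof. unfold Rabs; destruct (Rcase_abs x); lra. Qed.

Lemma derivable_pt_lim_eq_val f x l l' :
  derivable_pt_lim f x l -> l = l' -> derivable_pt_lim f x l'.
Proof. intros; subst; auto. Qed.

Lemma derivable_pt_lim_plus' f g x a b : derivable_pt_lim f x a -> derivable_pt_lim g x b ->
  derivable_pt_lim (fun s => f s + g s) x (a + b).
Proof. apply derivable_pt_lim_plus. Qed.

Lemma derivable_pt_lim_mult' f g x a b : derivable_pt_lim f x a -> derivable_pt_lim g x b ->
  derivable_pt_lim (fun s => f s * g s) x (a * g x + f x * b).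
Proof. apply derivable_pt_lim_mult. Qed.

Lemma derivable_pt_lim_sum6 (F : idx -> R -> R) d x :
  (forall j, derivable_pt_lim (F j) x (d j)) ->
  derivable_pt_lim (fun s => sum6 (fun j => F j s)) x (sum6 d).
Proof. intro H; unfold sum6; repeat apply derivable_pt_lim_plus'; apply H. Qed.

Lemma derivable_pt_lim_inv_sqrt u x du : derivable_pt_lim u x du -> 0 < u x ->
  derivable_pt_lim (fun s => / sqrt (u s)) x (- du / (2 * sqrt (u x) * u x)).
Proof.
  intros Hu Hp.
  assert (Hs := derivable_pt_lim_comp _ _ _ _ _ Hu (derivable_pt_lim_sqrt _ Hp)).
  assert (Hr : 0 < sqrt (u x)) by (apply sqrt_lt_R0; auto).
  assert (Hd := derivable_pt_lim_div (fct_cte 1) _ _ _ _ (derivable_pt_lim_const 1 x) Hs).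
  specialize (Hd ltac:(unfold comp; lra)).
  apply (derivable_pt_lim_ext (fct_cte 1 / comp sqrt u)%F).
  - intro z; unfold div_fct, fct_cte, comp, Rdiv; ring.
  - eapply derivable_pt_lim_eq_val; [apply Hd|].
    unfold comp, fct_cte, Rsqr; rewrite sqrt_sqrt by lra; field; lra.
Qed.

Lemma partial_unique f i p l1 l2 : partial f i p l1 -> partial f i p l2 -> l1 = l2.
Proof. apply uniqueness_limite. Qed.

(* The data of the theorem are polynomials in the coordinates and [/ rho].  Written as
   syntax trees they get a formal partial derivative [dterm], and continuity, local
   Lipschitz bounds and smoothness follow by structural induction. *)
Inductive term : Type :=
| tConst (a : R) | tVar (i : idx) | tAdd (a b : term) | tMul (a b : term) | tInvRho.

Fixpoint eval (e : term) (p : State) : R :=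
  match e with
  | tConst a => a
  | tVar i => p i
  | tAdd a b => eval a p + eval b p
  | tMul a b => eval a p * eval b p
  | tInvRho => / rho p
  end.

Fixpoint dterm (e : term) (i : idx) : term :=
  match e with
  | tConst _ => tConst 0
  | tVar j => tConst (if idx_eqb j i then 1 else 0)
  | tAdd a b => tAdd (dterm a i) (dterm b i)
  | tMul a b => tAdd (tMul (dterm a i) b) (tMul a (dterm b i))
  | tInvRho =>
      match i with
      | G1 => tMul (tConst (-1)) (tMul (tVar G1) (tMul tInvRho (tMul tInvRho tInvRho)))
      | G2 => tMul (tConst (-1)) (tMul (tVar G2) (tMul tInvRho (tMul tInvRho tInvRho)))
      | _ => tConst 0
      end
  end.

Lemma rho_pos p : inD p -> 0 < rho p.
Proof. unfold inD, rho; intro H; apply sqrt_lt_R0; lra. Qed.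

Lemma rho_sq p : rho p * rho p = p G1 ^ 2 + p G2 ^ 2.
Proof. unfold rho; apply sqrt_sqrt; nra. Qed.

Lemma eval_chain e (Y : R -> State) t (v : idx -> R) :
  inD (Y t) -> (forall i, derivable_pt_lim (fun s => Y s i) t (v i)) ->
  derivable_pt_lim (fun s => eval e (Y s)) t (sum6 (fun i => eval (dterm e i) (Y t) * v i)).
Proof.
  intros HD Hv; induction e; simpl.
  - eapply derivable_pt_lim_eq_val; [apply derivable_pt_lim_const|unfold sum6; simpl; ring].
  - eapply derivable_pt_lim_eq_val; [apply Hv|destruct i; unfold sum6; simpl; ring].
  - eapply derivable_pt_lim_eq_val; [apply (derivable_pt_lim_plus' _ _ _ _ _ IHe1 IHe2)|].
    unfold sum6; simpl; ring.
  - eapply derivable_pt_lim_eq_val; [apply (derivable_pt_lim_mult' _ _ _ _ _ IHe1 IHe2)|].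
    unfold sum6; simpl; ring.
  - assert (Hu : derivable_pt_lim (fun s => Y s G1 ^ 2 + Y s G2 ^ 2) t
                   (2 * Y t G1 * v G1 + 2 * Y t G2 * v G2)).
    { eapply derivable_pt_lim_eq_val.
      - apply derivable_pt_lim_plus'; simpl;
          repeat apply derivable_pt_lim_mult'; auto; apply derivable_pt_lim_const.
      - simpl; ring. }
    eapply derivable_pt_lim_eq_val; [apply (derivable_pt_lim_inv_sqrt _ _ _ Hu HD)|].
    change (sqrt (Y t G1 ^ 2 + Y t G2 ^ 2)) with (rho (Y t)).
    assert (Hr := rho_pos _ HD); rewrite <- (rho_sq (Y t)).
    unfold sum6; simpl; field; lra.
Qed.

Lemma partial_eval e p i : inD p -> partial (eval e) i p (eval (dterm e i) p).
Proof.
  intro HD; unfold partial.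
  assert (H := eval_chain e (fun s => upd p i s) (p i) (fun j => if idx_eqb j i then 1 else 0)).
  rewrite upd_id in H; eapply derivable_pt_lim_eq_val; [apply H; auto|].
  - intro j; unfold upd; destruct (idx_eqb j i);
      [apply derivable_pt_lim_id|apply derivable_pt_lim_const].
  - destruct i; unfold sum6; simpl; ring.
Qed.

Definition dist1 (q q' : State) : R := sum6 (fun j => Rabs (q j - q' j)).

Definition box (p0 : State) (r : R) (q : State) : Prop := forall j, Rabs (q j - p0 j) <= r.

Lemma dist1_nonneg q q' : 0 <= dist1 q q'.
Proof.
  unfold dist1, sum6; assert (H := fun k => Rabs_pos (q k - q' k)).
  generalize (H M1) (H M2) (H M3) (H G1) (H G2) (H G3); lra.
Qed.

Lemma coord_le_dist1 q q' j : Rabs (q j - q' j) <= dist1 q q'.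
Proof.
  unfold dist1, sum6; assert (H := fun k => Rabs_pos (q k - q' k)).
  generalize (H M1) (H M2) (H M3) (H G1) (H G2) (H G3); destruct j; lra.
Qed.

Lemma dist1_le x y B : (forall j, Rabs (x j - y j) <= B) -> dist1 x y <= 6 * B.
Proof. intro H; unfold dist1, sum6; generalize (H M1) (H M2) (H M3) (H G1) (H G2) (H G3); lra. Qed.

Lemma box_center p0 r : 0 <= r -> box p0 r p0.
Proof. intros Hr j; unfold Rminus; rewrite Rplus_opp_r, Rabs_R0; exact Hr. Qed.

Lemma Rabs_le_norm2 a b : Rabs a <= sqrt (a ^ 2 + b ^ 2).
Proof. rewrite <- sqrt_Rsqr_abs; apply sqrt_le_1_alt; unfold Rsqr; nra. Qed.

Lemma norm2_lipschitz a b c d :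
  Rabs (sqrt (a ^ 2 + b ^ 2) - sqrt (c ^ 2 + d ^ 2)) <= Rabs (a - c) + Rabs (b - d).
Proof.
  set (x := sqrt (a ^ 2 + b ^ 2)); set (y := sqrt (c ^ 2 + d ^ 2)).
  assert (Hx : 0 <= x) by apply sqrt_pos; assert (Hy : 0 <= y) by apply sqrt_pos.
  assert (Hx2 : x * x = a ^ 2 + b ^ 2) by (apply sqrt_sqrt; nra).
  assert (Hy2 : y * y = c ^ 2 + d ^ 2) by (apply sqrt_sqrt; nra).
  assert (Ha : Rabs a <= x) by apply Rabs_le_norm2.
  assert (Hb : Rabs b <= x) by (unfold x; rewrite Rplus_comm; apply Rabs_le_norm2).
  assert (Hc : Rabs c <= y) by apply Rabs_le_norm2.
  assert (Hd : Rabs d <= y) by (unfold y; rewrite Rplus_comm; apply Rabs_le_norm2).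
  assert (H1 := Rabs_pos (a - c)); assert (H2 := Rabs_pos (b - d)).
  destruct (Req_dec (x + y) 0) as [E|E].
  { replace (x - y) with 0 by lra; rewrite Rabs_R0; lra. }
  (* multiply by x + y: (x - y)(x + y) = (a - c)(a + c) + (b - d)(b + d) *)
  apply Rmult_le_reg_r with (x + y); [lra|].
  rewrite <- (Rabs_pos_eq (x + y)) at 1 by lra; rewrite <- Rabs_mult.
  replace ((x - y) * (x + y)) with ((a - c) * (a + c) + (b - d) * (b + d)) by nra.
  eapply Rle_trans; [apply Rabs_triang|]; rewrite !Rabs_mult.
  assert (Hac : Rabs (a + c) <= x + y) by (eapply Rle_trans; [apply Rabs_triang|lra]).
  assert (Hbd : Rabs (b + d) <= x + y) by (eapply Rle_trans; [apply Rabs_triang|lra]).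
  nra.
Qed.

Lemma rho_lipschitz q q' : Rabs (rho q - rho q') <= dist1 q q'.
Proof.
  eapply Rle_trans; [apply norm2_lipschitz|]; unfold dist1, sum6.
  assert (H := fun k => Rabs_pos (q k - q' k)); generalize (H M1) (H M2) (H M3) (H G3); lra.
Qed.

Lemma rho_box p0 r q : 4 * r <= rho p0 -> box p0 r q -> rho p0 / 2 <= rho q.
Proof.
  intros Hr Hb; assert (H := norm2_lipschitz (q G1) (q G2) (p0 G1) (p0 G2)).
  fold (rho q) (rho p0) in H; apply Rabs_le_inv in H.
  generalize (Hb G1) (Hb G2); lra.
Qed.

Lemma box_inD p r q : inD p -> 4 * r <= rho p -> box p r q -> inD q.
Proof.
  intros HD Hr4 Hb; assert (Hp := rho_pos p HD); assert (H := rho_box p r q Hr4 Hb).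
  unfold inD; rewrite <- rho_sq; nra.
Qed.

Lemma eval_bounded_lipschitz e p0 r : 0 < rho p0 -> 0 < r -> 4 * r <= rho p0 ->
  exists K L, 0 <= K /\ 0 <= L /\ forall q q', box p0 r q -> box p0 r q' ->
    Rabs (eval e q) <= K /\ Rabs (eval e q - eval e q') <= L * dist1 q q'.
Proof.
  intros Hr0 Hr Hr4; induction e; simpl.
  - exists (Rabs a), 0; split; [apply Rabs_pos|split; [lra|]]; intros q q' _ _.
    unfold Rminus; rewrite Rplus_opp_r, Rabs_R0; lra.
  - exists (Rabs (p0 i) + r), 1; split; [generalize (Rabs_pos (p0 i)); lra|split; [lra|]].
    intros q q' Hq Hq'; split.
    + replace (q i) with ((q i - p0 i) + p0 i) by ring.
      eapply Rle_trans; [apply Rabs_triang|]; specialize (Hq i); lra.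
    + rewrite Rmult_1_l; apply coord_le_dist1.
  - destruct IHe1 as (K1 & L1 & HK1 & HL1 & H1), IHe2 as (K2 & L2 & HK2 & HL2 & H2).
    exists (K1 + K2), (L1 + L2); split; [lra|split; [lra|]].
    intros q q' Hq Hq'; destruct (H1 q q' Hq Hq'), (H2 q q' Hq Hq'); split.
    + eapply Rle_trans; [apply Rabs_triang|lra].
    + replace (eval e1 q + eval e2 q - (eval e1 q' + eval e2 q'))
        with ((eval e1 q - eval e1 q') + (eval e2 q - eval e2 q')) by ring.
      eapply Rle_trans; [apply Rabs_triang|lra].
  - destruct IHe1 as (K1 & L1 & HK1 & HL1 & H1), IHe2 as (K2 & L2 & HK2 & HL2 & H2).
    exists (K1 * K2), (K1 * L2 + K2 * L1); split; [nra|split; [nra|]].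
    intros q q' Hq Hq'.
    destruct (H1 q q' Hq Hq') as [A1 B1], (H2 q q' Hq Hq') as [A2 B2].
    destruct (H2 q' q' Hq' Hq') as [A2' _].
    assert (Hd := dist1_nonneg q q'); split.
    + rewrite Rabs_mult; apply Rmult_le_compat; auto using Rabs_pos.
    + replace (eval e1 q * eval e2 q - eval e1 q' * eval e2 q')
        with (eval e1 q * (eval e2 q - eval e2 q') + (eval e1 q - eval e1 q') * eval e2 q')
        by ring.
      eapply Rle_trans; [apply Rabs_triang|]; rewrite !Rabs_mult.
      assert (Rabs (eval e1 q) * Rabs (eval e2 q - eval e2 q') <= K1 * (L2 * dist1 q q'))
        by (apply Rmult_le_compat; auto using Rabs_pos).
      assert (Rabs (eval e1 q - eval e1 q') * Rabs (eval e2 q') <= (L1 * dist1 q q') * K2)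
        by (apply Rmult_le_compat; auto using Rabs_pos).
      nra.
  - (* on the box, rho stays above rho p0 / 2 *)
    exists (2 / rho p0), (4 / (rho p0 * rho p0)); split; [|split].
    + apply Rlt_le, Rdiv_lt_0_compat; lra.
    + apply Rlt_le, Rdiv_lt_0_compat; nra.
    + intros q q' Hq Hq'.
      assert (Ha := rho_box _ _ _ Hr4 Hq); assert (Hb := rho_box _ _ _ Hr4 Hq').
      assert (Hl := rho_lipschitz q q'); split.
      * rewrite Rabs_pos_eq by (apply Rlt_le, Rinv_0_lt_compat; lra).
        apply Rmult_le_reg_l with (rho q); [lra|]; rewrite Rinv_r by lra.
        apply Rmult_le_reg_l with (rho p0); [lra|].
        replace (rho p0 * (rho q * (2 / rho p0))) with (2 * rho q) by (field; lra); lra.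
      * replace (/ rho q - / rho q') with ((rho q' - rho q) / (rho q * rho q'))
          by (field; lra).
        unfold Rdiv; rewrite Rabs_mult, (Rabs_pos_eq (/ _))
          by (apply Rlt_le, Rinv_0_lt_compat; nra).
        rewrite <- Rabs_Ropp, Ropp_minus_distr.
        assert (Hi : / (rho q * rho q') <= 4 / (rho p0 * rho p0)).
        { apply Rmult_le_reg_l with (rho q * rho q'); [nra|]; rewrite Rinv_r by nra.
          apply Rmult_le_reg_l with (rho p0 * rho p0); [nra|].
          replace (rho p0 * rho p0 * (rho q * rho q' * (4 / (rho p0 * rho p0))))
            with (4 * (rho q * rho q')) by (field; lra); nra. }
        assert (Hi0 : 0 <= / (rho q * rho q')) by (apply Rlt_le, Rinv_0_lt_compat; nra).
        rewrite Rmult_comm; apply Rmult_le_compat; auto using Rabs_pos.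
Qed.

Lemma eval_family_bounded_lipschitz (E : idx -> term) p0 r :
  0 < rho p0 -> 0 < r -> 4 * r <= rho p0 ->
  exists K L, 0 <= K /\ 0 <= L /\ forall q q', box p0 r q -> box p0 r q' -> forall i,
    Rabs (eval (E i) q) <= K /\ Rabs (eval (E i) q - eval (E i) q') <= L * dist1 q q'.
Proof.
  intros H1 H2 H3.
  destruct (eval_bounded_lipschitz (E M1) p0 r H1 H2 H3) as (K1 & L1 & A1 & B1 & C1).
  destruct (eval_bounded_lipschitz (E M2) p0 r H1 H2 H3) as (K2 & L2 & A2 & B2 & C2).
  destruct (eval_bounded_lipschitz (E M3) p0 r H1 H2 H3) as (K3 & L3 & A3 & B3 & C3).
  destruct (eval_bounded_lipschitz (E G1) p0 r H1 H2 H3) as (K4 & L4 & A4 & B4 & C4).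
  destruct (eval_bounded_lipschitz (E G2) p0 r H1 H2 H3) as (K5 & L5 & A5 & B5 & C5).
  destruct (eval_bounded_lipschitz (E G3) p0 r H1 H2 H3) as (K6 & L6 & A6 & B6 & C6).
  exists (K1 + K2 + K3 + K4 + K5 + K6), (L1 + L2 + L3 + L4 + L5 + L6).
  split; [lra|split; [lra|]]; intros q q' Hq Hq' i; assert (Hd := dist1_nonneg q q').
  destruct i; [destruct (C1 q q' Hq Hq')|destruct (C2 q q' Hq Hq')|destruct (C3 q q' Hq Hq')
              |destruct (C4 q q' Hq Hq')|destruct (C5 q q' Hq Hq')|destruct (C6 q q' Hq Hq')];
  split; nra.
Qed.

Lemma cont_on_eval e : cont_on inD (eval e).
Proof.
  intros p Hp eps He; assert (Hr := rho_pos p Hp).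
  destruct (eval_bounded_lipschitz e p (rho p / 4)) as (K & L & HK & HL & H); try lra.
  set (d := eps / (6 * (L + 1))).
  assert (Hd : 0 < d) by (apply Rdiv_lt_0_compat; lra).
  exists (Rmin (rho p / 4) d); split; [apply Rmin_pos; lra|].
  intros q Hq Hqp.
  assert (Bq : box p (rho p / 4) q)
    by (intro j; generalize (Hqp j) (Rmin_l (rho p / 4) d); lra).
  assert (Bp : box p (rho p / 4) p) by (apply box_center; lra).
  destruct (H q p Bq Bp) as [_ Hl].
  assert (Hdist : dist1 q p <= 6 * d)
    by (apply dist1_le; intro j; generalize (Hqp j) (Rmin_r (rho p / 4) d); lra).
  assert (L * (6 * d) < eps).
  { replace (L * (6 * d)) with (eps * (L / (L + 1))) by (unfold d; field; lra).
    assert (L / (L + 1) < 1).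
    { apply Rmult_lt_reg_r with (L + 1); [lra|].
      unfold Rdiv; rewrite Rmult_assoc, Rinv_l by lra; lra. }
    nra. }
  nra.
Qed.

Lemma smooth_eval e : smooth inD (eval e).
Proof.
  intro k; revert e; induction k; intro e; simpl.
  - apply cont_on_eval.
  - exists (fun p i => eval (dterm e i) p); split.
    + intros p Hp i; apply partial_eval; auto.
    + intro i; apply IHk.
Qed.

Lemma box_upd p r i z : 0 <= r -> Rabs (z - p i) <= r -> box p r (upd p i z).
Proof.
  intros Hr Hz j; destruct (idx_eq_dec j i) as [->|E].
  - rewrite upd_eq; auto.
  - rewrite upd_neq by auto; apply box_center; auto.
Qed.

Lemma partial_ext_inD g1 g2 i p l : inD p -> (forall q, inD q -> g1 q = g2 q) ->
  partial g1 i p l -> partial g2 i p l.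
Proof.
  intros HD Heq H; unfold partial in *; assert (Hp := rho_pos p HD).
  apply (derivable_pt_lim_locally_ext (fun s => g1 (upd p i s)) (fun s => g2 (upd p i s))
           _ (p i - rho p / 4) (p i + rho p / 4) _); [lra| |auto].
  intros z Hz; apply Heq, (box_inD p (rho p / 4)); [auto|lra|].
  apply box_upd; [lra|apply Rabs_le; lra].
Qed.

Lemma partial_shift g q j l s0 a : partial g j q l -> q j = a + s0 ->
  derivable_pt_lim (fun s => g (upd q j (a + s))) s0 l.
Proof.
  intros H E; unfold partial in H; rewrite E in H.
  assert (Hi : derivable_pt_lim (fun s => a + s) s0 1).
  { eapply derivable_pt_lim_eq_val;
      [apply derivable_pt_lim_plus'; [apply derivable_pt_lim_const|apply derivable_pt_lim_id]|ring]. }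
  eapply derivable_pt_lim_eq_val; [apply (derivable_pt_lim_comp _ _ _ _ _ Hi H)|ring].
Qed.

Lemma Rabs_le_of_range x a : 0 <= x <= a -> Rabs x <= a.
Proof. intro; rewrite Rabs_pos_eq; lra. Qed.

Lemma eq_of_close x y : (forall e, 0 < e -> Rabs (x - y) < 2 * e) -> x = y.
Proof.
  intro H; destruct (Req_dec x y) as [E|E]; auto.
  assert (Hp : 0 < Rabs (x - y)) by (apply Rabs_pos_lt; lra).
  specialize (H (Rabs (x - y) / 2) ltac:(lra)); lra.
Qed.

(* Schwarz: the second difference [f(h,h) - f(h,0) - f(0,h) + f(0,0)] in the plane of
   coordinates [i], [k] equals [h^2] times either mixed partial at some nearby point
   (mean value theorem twice, in either order); continuity lets [h -> 0]. *)
Section Schwarz.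
Variables (f : State -> R) (D : State -> idx -> R) (H : State -> idx -> idx -> R).
Hypothesis HG : is_grad inD f D.
Hypothesis HH : forall j, is_grad inD (fun q => D q j) (fun q l => H q j l).
Hypothesis HC : forall j l, cont_on inD (fun q => H q j l).
Variables (p : State) (i k : idx).
Hypothesis HD : inD p.
Hypothesis Hik : i <> k.

Definition shift2 s t := upd (upd p i (p i + s)) k (p k + t).

Lemma shift2_i s t : shift2 s t i = p i + s.
Proof. unfold shift2; rewrite upd_neq by auto; apply upd_eq. Qed.

Lemma shift2_k s t : shift2 s t k = p k + t.
Proof. apply upd_eq. Qed.

Lemma shift2_other s t j : j <> i -> j <> k -> shift2 s t j = p j.
Proof. intros; unfold shift2; rewrite !upd_neq; auto. Qed.

Lemma shift2_upd_i s s0 t : shift2 s t = upd (shift2 s0 t) i (p i + s).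
Proof. unfold shift2; rewrite (upd_comm _ k i), upd_upd by auto; reflexivity. Qed.

Lemma shift2_upd_k s t t0 : shift2 s t = upd (shift2 s t0) k (p k + t).
Proof. unfold shift2; rewrite upd_upd; reflexivity. Qed.

Let r0 := rho p / 4.

Lemma r0_pos : 0 < r0.
Proof. unfold r0; generalize (rho_pos p HD); lra. Qed.

Lemma shift2_close s t d : 0 <= d -> Rabs s <= d -> Rabs t <= d -> box p d (shift2 s t).
Proof.
  intros Hd Hs Ht j; destruct (idx_eq_dec j i) as [->|Ei].
  - rewrite shift2_i; replace (p i + s - p i) with s by ring; auto.
  - destruct (idx_eq_dec j k) as [->|Ek].
    + rewrite shift2_k; replace (p k + t - p k) with t by ring; auto.
    + rewrite shift2_other by auto; apply box_center; auto.
Qed.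

Lemma shift2_inD s t : Rabs s <= r0 -> Rabs t <= r0 -> inD (shift2 s t).
Proof.
  intros Hs Ht; apply (box_inD p r0); auto; [unfold r0; lra|].
  apply shift2_close; auto; apply Rlt_le, r0_pos.
Qed.

Lemma shift2_deriv_s (g : State -> R) (G : State -> idx -> R) s0 t :
  is_grad inD g G -> Rabs s0 <= r0 -> Rabs t <= r0 ->
  derivable_pt_lim (fun s => g (shift2 s t)) s0 (G (shift2 s0 t) i).
Proof.
  intros HgG Hs Ht.
  apply (derivable_pt_lim_ext (fun s => g (upd (shift2 s0 t) i (p i + s)))).
  - intro z; rewrite <- shift2_upd_i; auto.
  - apply partial_shift; [apply HgG, shift2_inD; auto|apply shift2_i].
Qed.

Lemma shift2_deriv_t (g : State -> R) (G : State -> idx -> R) s t0 :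
  is_grad inD g G -> Rabs s <= r0 -> Rabs t0 <= r0 ->
  derivable_pt_lim (fun t => g (shift2 s t)) t0 (G (shift2 s t0) k).
Proof.
  intros HgG Hs Ht.
  apply (derivable_pt_lim_ext (fun t => g (upd (shift2 s t0) k (p k + t)))).
  - intro z; rewrite <- shift2_upd_k; auto.
  - apply partial_shift; [apply HgG, shift2_inD; auto|apply shift2_k].
Qed.

Definition second_difference h :=
  f (shift2 h h) - f (shift2 h 0) - f (shift2 0 h) + f (shift2 0 0).

Lemma second_difference_ik h : 0 < h <= r0 -> exists xi eta, 0 < xi < h /\ 0 < eta < h /\
  second_difference h = h * h * H (shift2 xi eta) i k.
Proof.
  intros Hh.
  destruct (MVT_cor2 (fun s => f (shift2 s h) - f (shift2 s 0))
              (fun s => D (shift2 s h) i - D (shift2 s 0) i) 0 h) as [xi [E1 Hxi]]; [lra| |].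
  { intros s Hs; apply derivable_pt_lim_minus; apply shift2_deriv_s; auto;
      apply Rabs_le_of_range; lra. }
  destruct (MVT_cor2 (fun t => D (shift2 xi t) i) (fun t => H (shift2 xi t) i k) 0 h)
    as [eta [E2 Heta]]; [lra| |].
  { intros t Ht; apply (shift2_deriv_t (fun q => D q i) (fun q l => H q i l)); auto;
      apply Rabs_le_of_range; lra. }
  exists xi, eta; split; [lra|split; [lra|]].
  unfold second_difference; cbv beta in E1, E2.
  replace (f (shift2 h h) - f (shift2 h 0) - f (shift2 0 h) + f (shift2 0 0))
    with ((f (shift2 h h) - f (shift2 h 0)) - (f (shift2 0 h) - f (shift2 0 0))) by ring.
  rewrite E1, E2; ring.
Qed.

Lemma second_difference_ki h : 0 < h <= r0 -> exists xi eta, 0 < xi < h /\ 0 < eta < h /\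
  second_difference h = h * h * H (shift2 xi eta) k i.
Proof.
  intros Hh.
  destruct (MVT_cor2 (fun t => f (shift2 h t) - f (shift2 0 t))
              (fun t => D (shift2 h t) k - D (shift2 0 t) k) 0 h) as [eta [E1 Heta]]; [lra| |].
  { intros t Ht; apply derivable_pt_lim_minus; apply shift2_deriv_t; auto;
      apply Rabs_le_of_range; lra. }
  destruct (MVT_cor2 (fun s => D (shift2 s eta) k) (fun s => H (shift2 s eta) k i) 0 h)
    as [xi [E2 Hxi]]; [lra| |].
  { intros s Hs; apply (shift2_deriv_s (fun q => D q k) (fun q l => H q k l)); auto;
      apply Rabs_le_of_range; lra. }
  exists xi, eta; split; [lra|split; [lra|]].
  unfold second_difference; cbv beta in E1, E2.
  replace (f (shift2 h h) - f (shift2 h 0) - f (shift2 0 h) + f (shift2 0 0))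
    with ((f (shift2 h h) - f (shift2 0 h)) - (f (shift2 h 0) - f (shift2 0 0))) by ring.
  rewrite E1, E2; ring.
Qed.

Lemma mixed_partials_eq : H p i k = H p k i.
Proof.
  apply eq_of_close; intros e He.
  destruct (HC i k p HD e He) as [d1 [Hd1 C1]], (HC k i p HD e He) as [d2 [Hd2 C2]].
  assert (Hr := r0_pos).
  set (h := Rmin r0 (Rmin d1 d2)).
  assert (Hh1 : h <= r0) by apply Rmin_l.
  assert (Hh2 : h <= d1) by (eapply Rle_trans; [apply Rmin_r|apply Rmin_l]).
  assert (Hh3 : h <= d2) by (eapply Rle_trans; [apply Rmin_r|apply Rmin_r]).
  assert (Hh0 : 0 < h) by (apply Rmin_pos; [auto|apply Rmin_pos; auto]).
  destruct (second_difference_ik h) as (x1 & y1 & Hx1 & Hy1 & EA); [lra|].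
  destruct (second_difference_ki h) as (x2 & y2 & Hx2 & Hy2 & EB); [lra|].
  assert (E : H (shift2 x1 y1) i k = H (shift2 x2 y2) k i).
  { apply Rmult_eq_reg_l with (h * h); [rewrite <- EA, <- EB; auto|nra]. }
  assert (near : forall x y d, 0 < x < h -> 0 < y < h -> h <= d ->
            inD (shift2 x y) /\ forall j, Rabs (shift2 x y j - p j) < d).
  { intros x y d Hx Hy Hd; split.
    - apply shift2_inD; apply Rabs_le_of_range; lra.
    - intro j; apply Rle_lt_trans with (Rmax x y).
      + apply shift2_close; [|rewrite Rabs_pos_eq by lra; apply Rmax_l
                              |rewrite Rabs_pos_eq by lra; apply Rmax_r].
        apply Rle_trans with x; [lra|apply Rmax_l].
      + apply Rmax_lub_lt; lra. }
  destruct (near x1 y1 d1 Hx1 Hy1 Hh2) as [In1 Cl1].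
  destruct (near x2 y2 d2 Hx2 Hy2 Hh3) as [In2 Cl2].
  assert (A1 := C1 _ In1 Cl1); assert (A2 := C2 _ In2 Cl2); cbv beta in A1, A2.
  rewrite E in A1; apply Rabs_def2 in A1; apply Rabs_def2 in A2; apply Rabs_def1; lra.
Qed.
End Schwarz.

Lemma smooth_hessian f df : smooth inD f -> is_grad inD f df ->
  exists Hf : State -> idx -> idx -> R,
    (forall p, inD p -> forall i k, partial (fun q => df q i) k p (Hf p i k)) /\
    (forall p, inD p -> forall i k, Hf p i k = Hf p k i).
Proof.
  intros Hs Hg; destruct (Hs 2%nat) as [df0 [G0 Hc]].
  destruct (choice (fun (i : idx) (dd : State -> idx -> R) =>
      is_grad inD (fun p => df0 p i) dd /\ forall j, Ck inD 0 (fun p => dd p j)))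
    as [dd Hdd].
  { intro i; destruct (Hc i) as [dd [A B]]; exists dd; auto. }
  assert (Eq : forall q, inD q -> forall i, df q i = df0 q i)
    by (intros q Hq i; eapply partial_unique; [apply Hg|apply G0]; auto).
  exists (fun p i k => dd i p k); split.
  - intros p Hp i k; apply (partial_ext_inD (fun q => df0 q i)); auto.
    + intros q Hq; rewrite Eq; auto.
    + apply (proj1 (Hdd i)); auto.
  - intros p Hp i k; destruct (idx_eq_dec i k) as [->|E]; auto.
    apply (mixed_partials_eq f df0 (fun q j l => dd j q l)); auto.
    + intro j; apply (proj1 (Hdd j)).
    + intros j l; apply (proj2 (Hdd j)).
Qed.

Definition mxv (P : idx -> idx -> R) (b : idx -> R) k := sum6 (fun l => P k l * b l).
Definition vxm (a : idx -> R) (P : idx -> idx -> R) l := sum6 (fun k => a k * P k l).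

(* [DP i k l] stands for the partial derivative of [P k l] in direction [i], and
   [A k i] for that of the gradient entry [a k]. *)
Definition dbracket (DP : idx -> idx -> idx -> R) (a b : idx -> R) i :=
  sum6 (fun k => sum6 (fun l => a k * DP i k l * b l)).

Definition bracket_grad (P : idx -> idx -> R) (DP : idx -> idx -> idx -> R)
    (A : idx -> idx -> R) (a : idx -> R) (B : idx -> idx -> R) (b : idx -> R) i :=
  sum6 (fun k => A k i * mxv P b k) + dbracket DP a b i + sum6 (fun l => vxm a P l * B l i).

Lemma bracket_partial (P : State -> idx -> idx -> R) df dg p (DP : idx -> idx -> idx -> R)
    (Hf Hg : idx -> idx -> R) i :
  (forall k, partial (fun q => df q k) i p (Hf k i)) ->
  (forall l, partial (fun q => dg q l) i p (Hg l i)) ->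
  (forall k l, partial (fun q => P q k l) i p (DP i k l)) ->
  partial (bracket P df dg) i p (bracket_grad (P p) DP Hf (df p) Hg (dg p) i).
Proof.
  intros H1 H2 H3; unfold partial, bracket; eapply derivable_pt_lim_eq_val.
  - apply derivable_pt_lim_sum6; intro k; apply derivable_pt_lim_sum6; intro l.
    apply derivable_pt_lim_mult'; [apply derivable_pt_lim_mult'|]; [apply H1|apply H3|apply H2].
  - cbv beta; rewrite upd_id; unfold bracket_grad, dbracket, mxv, vxm, sum6; ring.
Qed.

(* In the cyclic sum of [bracket_grad]s the Hessian terms cancel by symmetry and
   skew-symmetry, leaving only the terms with derivatives of [P]. *)
Section JacobiAlgebra.
Variables (P : idx -> idx -> R) (DP : idx -> idx -> idx -> R).
Hypothesis P_skew : forall i j, P i j = - P j i.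

Definition jacobiator_dP (a b c : idx -> R) := sum6 (fun i => dbracket DP a b i * mxv P c i).

Lemma vxm_skew a l : vxm a P l = - mxv P a l.
Proof. unfold vxm, mxv, sum6; rewrite !(P_skew _ l); ring. Qed.

Lemma sum_bracket_mxv u c :
  sum6 (fun i => sum6 (fun j => u i * P i j * c j)) = sum6 (fun i => u i * mxv P c i).
Proof. unfold mxv, sum6; ring. Qed.

Lemma sym_form_swap (A : idx -> idx -> R) (x y : idx -> R) : (forall i j, A i j = A j i) ->
  sum6 (fun i => sum6 (fun k => A k i * x k) * y i)
  = sum6 (fun i => sum6 (fun l => y l * A l i) * x i).
Proof.
  intro HA; unfold sum6.
  rewrite (HA M2 M1), (HA M3 M1), (HA M3 M2), (HA G1 M1), (HA G1 M2), (HA G1 M3),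
   (HA G2 M1), (HA G2 M2), (HA G2 M3), (HA G2 G1), (HA G3 M1), (HA G3 M2), (HA G3 M3),
   (HA G3 G1), (HA G3 G2).
  ring.
Qed.

Lemma jacobi_of_jacobiator_dP (a b c u v w : idx -> R) (A B C : idx -> idx -> R) :
  (forall i j, A i j = A j i) -> (forall i j, B i j = B j i) -> (forall i j, C i j = C j i) ->
  jacobiator_dP a b c + jacobiator_dP b c a + jacobiator_dP c a b = 0 ->
  (forall i, u i = bracket_grad P DP A a B b i) ->
  (forall i, v i = bracket_grad P DP B b C c i) ->
  (forall i, w i = bracket_grad P DP C c A a i) ->
  sum6 (fun i => sum6 (fun j => u i * P i j * c j))
  + sum6 (fun i => sum6 (fun j => v i * P i j * a j))
  + sum6 (fun i => sum6 (fun j => w i * P i j * b j)) = 0.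
Proof.
  intros HA HB HC HS Hu Hv Hw; rewrite !sum_bracket_mxv.
  rewrite (sum6_ext (fun i => u i * _) _ (fun i => f_equal (fun x => x * _) (Hu i))),
    (sum6_ext (fun i => v i * _) _ (fun i => f_equal (fun x => x * _) (Hv i))),
    (sum6_ext (fun i => w i * _) _ (fun i => f_equal (fun x => x * _) (Hw i))).
  assert (EA := sym_form_swap A (mxv P b) (mxv P c) HA).
  assert (EB := sym_form_swap B (mxv P c) (mxv P a) HB).
  assert (EC := sym_form_swap C (mxv P a) (mxv P b) HC).
  unfold bracket_grad, jacobiator_dP in *; unfold sum6 in *; rewrite !vxm_skew.
  revert EA EB EC HS; generalize (mxv P a) (mxv P b) (mxv P c); intros pa pb pc EA EB EC HS.
  lra.
Qed.
End JacobiAlgebra.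

Lemma poisson_on_of_jacobiator_dP (P : State -> idx -> idx -> R)
    (DP : State -> idx -> idx -> idx -> R) :
  (forall p i j, P p i j = - P p j i) ->
  (forall p, inD p -> forall i k l, partial (fun q => P q k l) i p (DP p i k l)) ->
  (forall p, inD p -> forall a b c : idx -> R,
     jacobiator_dP (P p) (DP p) a b c + jacobiator_dP (P p) (DP p) b c a
     + jacobiator_dP (P p) (DP p) c a b = 0) ->
  poisson_on inD P.
Proof.
  intros Pskew HP Hstruct f g h Sf Sg Sh df dg dh dfg dgh dhf Gf Gg Gh Gfg Ggh Ghf p HD.
  destruct (smooth_hessian f df Sf Gf) as [Hf [HfP HfS]].
  destruct (smooth_hessian g dg Sg Gg) as [Hg [HgP HgS]].
  destruct (smooth_hessian h dh Sh Gh) as [Hh [HhP HhS]].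
  assert (grad_bracket : forall (F G : State -> idx -> R) HF HG,
            (forall i k, partial (fun q => F q k) i p (HF p k i)) ->
            (forall i k, partial (fun q => G q k) i p (HG p k i)) ->
            forall FG, is_grad inD (bracket P F G) FG ->
            forall i, FG p i = bracket_grad (P p) (DP p) (HF p) (F p) (HG p) (G p) i).
  { intros F G HF HG H1 H2 FG HFG i; eapply partial_unique; [apply (HFG p HD i)|].
    apply bracket_partial; auto. }
  unfold bracket.
  apply (jacobi_of_jacobiator_dP (P p) (DP p) (Pskew p) (df p) (dg p) (dh p)
           (dfg p) (dgh p) (dhf p) (Hf p) (Hg p) (Hh p)); auto.
Qed.

Lemma Pi_skew m1 m2 m3 p i j : Pi m1 m2 m3 p i j = - Pi m1 m2 m3 p j i.
Proof. unfold Pi; destruct i, j; ring. Qed.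

Definition tNeg e := tMul (tConst (-1)) e.

Definition Pi_term (m1 m2 m3 : term) (k l : idx) : term :=
  let a1 := tAdd (tVar M1) m1 in let a2 := tAdd (tVar M2) m2 in let a3 := tAdd (tVar M3) m3 in
  match k, l with
  | M1, M2 => tNeg a3 | M1, M3 => a2 | M1, G2 => tNeg (tVar G3) | M1, G3 => tVar G2
  | M2, M1 => a3 | M2, M3 => tNeg a1 | M2, G1 => tVar G3 | M2, G3 => tNeg (tVar G1)
  | M3, M1 => tNeg a2 | M3, M2 => a1 | M3, G1 => tNeg (tVar G2) | M3, G2 => tVar G1
  | G1, M2 => tNeg (tVar G3) | G1, M3 => tVar G2
  | G2, M1 => tVar G3 | G2, M3 => tNeg (tVar G1)
  | G3, M1 => tNeg (tVar G2) | G3, M2 => tVar G1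
  | _, _ => tConst 0
  end.

Lemma Pi_eval m1 m2 m3 p k l :
  Pi (eval m1) (eval m2) (eval m3) p k l = eval (Pi_term m1 m2 m3 k l) p.
Proof. destruct k, l; unfold Pi, Pi_term, tNeg; cbv zeta; cbn [eval]; ring. Qed.

Definition indep_of_M (m : term) (p : State) : Prop :=
  eval (dterm m M1) p = 0 /\ eval (dterm m M2) p = 0 /\ eval (dterm m M3) p = 0.

Definition gamma_dot_curl (m1 m2 m3 : term) (p : State) : R :=
  let d m j := eval (dterm m j) p in
  p G1 * (d m3 G2 - d m2 G3) + p G2 * (d m1 G3 - d m3 G1) + p G3 * (d m2 G1 - d m1 G2).

Lemma Pi_jacobiator_dP m1 m2 m3 p (a b c : idx -> R) :
  indep_of_M m1 p -> indep_of_M m2 p -> indep_of_M m3 p ->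
  let P := Pi (eval m1) (eval m2) (eval m3) p in
  let DP i k l := eval (dterm (Pi_term m1 m2 m3 k l) i) p in
  jacobiator_dP P DP a b c + jacobiator_dP P DP b c a + jacobiator_dP P DP c a b
  = gamma_dot_curl m1 m2 m3 p
    * (a M1 * (b M2 * c M3 - b M3 * c M2) - a M2 * (b M1 * c M3 - b M3 * c M1)
       + a M3 * (b M1 * c M2 - b M2 * c M1)).
Proof.
  intros (E1 & E2 & E3) (E4 & E5 & E6) (E7 & E8 & E9); cbv zeta.
  unfold jacobiator_dP, dbracket, mxv, gamma_dot_curl, sum6, Pi, Pi_term, tNeg; cbv zeta.
  cbn [eval dterm idx_eqb].
  rewrite E1, E2, E3, E4, E5, E6, E7, E8, E9; ring.
Qed.

Theorem poisson_on_Pi m1 m2 m3 :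
  (forall p, inD p -> indep_of_M m1 p /\ indep_of_M m2 p /\ indep_of_M m3 p) ->
  (forall p, inD p -> gamma_dot_curl m1 m2 m3 p = 0) ->
  poisson_on inD (Pi (eval m1) (eval m2) (eval m3)).
Proof.
  intros Hindep Hcurl.
  apply (poisson_on_of_jacobiator_dP _ (fun p i k l => eval (dterm (Pi_term m1 m2 m3 k l) i) p)).
  - apply Pi_skew.
  - intros p HD i k l; apply (partial_ext_inD (eval (Pi_term m1 m2 m3 k l))); auto.
    + intros q _; symmetry; apply Pi_eval.
    + apply partial_eval; auto.
  - intros p HD a b c; destruct (Hindep p HD) as (H1 & H2 & H3).
    rewrite (Pi_jacobiator_dP m1 m2 m3 p a b c H1 H2 H3), (Hcurl p HD); ring.
Qed.

Lemma MVT_abs_bound (f f' : R -> R) a b B : a <= b ->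
  (forall x, a <= x <= b -> derivable_pt_lim f x (f' x)) ->
  (forall x, a <= x <= b -> Rabs (f' x) <= B) -> Rabs (f b - f a) <= B * (b - a).
Proof.
  intros Hab Hd HB; destruct (Req_dec a b) as [<-|Ne].
  - unfold Rminus; rewrite !Rplus_opp_r, Rabs_R0; lra.
  - destruct (MVT_cor2 f f' a b ltac:(lra) Hd) as [x [E Hx]].
    rewrite E, Rabs_mult, (Rabs_pos_eq (b - a)) by lra.
    apply Rmult_le_compat_r; [lra|apply HB; lra].
Qed.

Lemma MVT_abs_lipschitz (f f' : R -> R) lo hi B u v : lo <= u <= hi -> lo <= v <= hi ->
  (forall x, lo <= x <= hi -> derivable_pt_lim f x (f' x)) ->
  (forall x, lo <= x <= hi -> Rabs (f' x) <= B) -> Rabs (f u - f v) <= B * Rabs (u - v).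
Proof.
  intros Hu Hv Hd HB; destruct (Rle_dec v u).
  - rewrite (Rabs_pos_eq (u - v)) by lra.
    apply (MVT_abs_bound f f'); [lra| |]; intros; [apply Hd|apply HB]; lra.
  - rewrite <- (Rabs_Ropp (u - v)), (Rabs_pos_eq (- (u - v))) by lra.
    rewrite <- Rabs_Ropp, !Ropp_minus_distr.
    apply (MVT_abs_bound f f'); [lra| |]; intros; [apply Hd|apply HB]; lra.
Qed.

Lemma continuity_pt_of_lipschitz g t M :
  (forall s, Rabs (g s - g t) <= M * Rabs (s - t)) -> continuity_pt g t.
Proof.
  intros H eps He; assert (Hm := Rabs_pos M).
  exists (eps / (Rabs M + 1)); split; [apply Rdiv_lt_0_compat; lra|].
  intros x [_ Hx]; simpl in *; unfold Rdist in *.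
  eapply Rle_lt_trans; [apply H|]; assert (Hx0 := Rabs_pos (x - t)).
  apply Rle_lt_trans with ((Rabs M + 1) * Rabs (x - t));
    [generalize (Rle_abs M); nra|].
  apply Rmult_lt_reg_l with (/ (Rabs M + 1)); [apply Rinv_0_lt_compat; lra|].
  rewrite <- Rmult_assoc, Rinv_l by lra; unfold Rdiv in Hx; lra.
Qed.

(* Time is clamped to
   [[0, T]] so that the iterates are total; [T] is small enough that they stay in the
   box ([K T <= r]) and that the iteration contracts with ratio [6 L T <= 1/2]. *)
Section Picard.
Variables (F : State -> idx -> R) (x0 : State) (r K L : R).
Hypothesis Hr : 0 < r.
Hypothesis HK : 0 <= K.
Hypothesis HL : 0 <= L.
Hypothesis HFb : forall x, box x0 r x -> forall i, Rabs (F x i) <= K.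
Hypothesis HFl : forall x y, box x0 r x -> box x0 r y -> forall i,
  Rabs (F x i - F y i) <= L * dist1 x y.

Definition picard_time := Rmin (r / (K + 1)) (1 / (12 * (L + 1))).

Lemma picard_time_pos : 0 < picard_time.
Proof. unfold picard_time; apply Rmin_pos; apply Rdiv_lt_0_compat; lra. Qed.

Lemma picard_time_K : K * picard_time <= r.
Proof.
  apply Rle_trans with (K * (r / (K + 1))).
  - apply Rmult_le_compat_l; auto; apply Rmin_l.
  - apply Rmult_le_reg_r with (K + 1); [lra|]; unfold Rdiv.
    rewrite Rmult_assoc, (Rmult_assoc r), Rinv_l by lra; nra.
Qed.

Lemma picard_time_L : 6 * L * picard_time <= 1 / 2.
Proof.
  apply Rle_trans with (6 * L * (1 / (12 * (L + 1)))).
  - apply Rmult_le_compat_l; [lra|apply Rmin_r].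
  - apply Rmult_le_reg_r with (12 * (L + 1)); [lra|]; unfold Rdiv.
    rewrite Rmult_assoc, (Rmult_assoc 1), Rinv_l by lra; nra.
Qed.

Let T := picard_time.

Definition clamp t := Rmax 0 (Rmin T t).

Lemma clamp_cases t :
  (t < 0 /\ clamp t = 0) \/ (0 <= t <= T /\ clamp t = t) \/ (T < t /\ clamp t = T).
Proof.
  assert (H := picard_time_pos); unfold clamp, Rmax, Rmin; fold T in H |- *.
  destruct (Rle_dec T t) as [a|a].
  - destruct (Rle_dec 0 T) as [b|b]; [|lra].
    destruct (Req_dec t T) as [->|Ne]; [right; left; lra|right; right; lra].
  - destruct (Rle_dec 0 t); [right; left; lra|left; lra].
Qed.

Lemma clamp_range t : 0 <= clamp t <= T.
Proof.
  assert (H := picard_time_pos); fold T in H.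
  destruct (clamp_cases t) as [[A B]|[[A B]|[A B]]]; rewrite B; lra.
Qed.

Lemma clamp_lipschitz t s : Rabs (clamp t - clamp s) <= Rabs (t - s).
Proof.
  assert (H := picard_time_pos); fold T in H.
  assert (A1 := Rle_abs (t - s)); assert (A2 := Rle_abs (- (t - s))); rewrite Rabs_Ropp in A2.
  apply Rabs_le.
  destruct (clamp_cases t) as [[A B]|[[A B]|[A B]]];
    destruct (clamp_cases s) as [[C D]|[[C D]|[C D]]]; rewrite B, D; lra.
Qed.

Lemma clamp_id t : 0 <= t <= T -> clamp t = t.
Proof. intro; destruct (clamp_cases t) as [[A B]|[[A B]|[A B]]]; auto; lra. Qed.

Definition cont_on_time (g : R -> R) := forall x, 0 <= x <= T -> continuity_pt g x.

Lemma T_nonneg : 0 <= T.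
Proof. apply Rlt_le, picard_time_pos. Qed.

(* [0] when [g] is not continuous on [[0, T]]; only applied to continuous [g]. *)
Definition integral0 (g : R -> R) (t : R) : R :=
  match excluded_middle_informative (cont_on_time g) with
  | left C => primitive T_nonneg (FTC_P1 T_nonneg C) (clamp t)
  | right _ => 0
  end.

Lemma integral0_primitive g : cont_on_time g -> exists Pr : R -> R,
  (forall t, integral0 g t = Pr (clamp t)) /\
  (forall x, 0 <= x <= T -> derivable_pt_lim Pr x (g x)) /\ Pr 0 = 0.
Proof.
  intro C; unfold integral0.
  destruct (excluded_middle_informative (cont_on_time g)) as [C'|Nc]; [|contradiction].
  exists (primitive T_nonneg (FTC_P1 T_nonneg C')); split; [auto|split].
  - intros x Hx; apply RiemannInt_P28; auto.
  - unfold primitive; destruct (Rle_dec 0 0) as [a|a]; [|lra].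
    destruct (Rle_dec 0 T) as [b|b]; [apply RiemannInt_P9|exfalso; apply b, T_nonneg].
Qed.

Fixpoint picard (k : nat) : R -> State :=
  match k with
  | O => fun _ => x0
  | S k => fun t i => x0 i + integral0 (fun s => F (picard k s) i) t
  end.

Definition picard_inv (X : R -> State) :=
  (forall t s i, Rabs (X t i - X s i) <= K * Rabs (t - s)) /\
  (forall t i, Rabs (X t i - x0 i) <= K * clamp t).

Lemma picard_inv_box X t : picard_inv X -> box x0 r (X t).
Proof.
  intros [_ H] i; eapply Rle_trans; [apply H|]; assert (Hc := clamp_range t).
  apply Rle_trans with (K * T); [apply Rmult_le_compat_l; lra|apply picard_time_K].
Qed.

Lemma picard_integral X i : picard_inv X -> exists Pr : R -> R,
  (forall t, integral0 (fun s => F (X s) i) t = Pr (clamp t)) /\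
  (forall x, 0 <= x <= T -> derivable_pt_lim Pr x (F (X x) i)) /\ Pr 0 = 0 /\
  (forall u v, 0 <= u <= T -> 0 <= v <= T -> Rabs (Pr u - Pr v) <= K * Rabs (u - v)).
Proof.
  intro HI; destruct (integral0_primitive (fun s => F (X s) i)) as [Pr [E1 [E2 E3]]].
  { intros t _; apply (continuity_pt_of_lipschitz _ _ (L * (6 * K))); intro s.
    eapply Rle_trans; [apply HFl; apply picard_inv_box; auto|].
    replace (L * (6 * K) * Rabs (s - t)) with (L * (6 * (K * Rabs (s - t)))) by ring.
    apply Rmult_le_compat_l, dist1_le; auto; intro j; apply (proj1 HI). }
  exists Pr; split; [auto|split; [auto|split; [auto|]]].
  intros u v Hu Hv; apply (MVT_abs_lipschitz Pr (fun s => F (X s) i) 0 T); auto.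
  intros x _; apply HFb, picard_inv_box; auto.
Qed.

Lemma picard_inv_all k : picard_inv (picard k).
Proof.
  induction k.
  - split; intros; simpl; unfold Rminus; rewrite Rplus_opp_r, Rabs_R0;
      apply Rmult_le_pos; auto; [apply Rabs_pos|apply clamp_range].
  - split.
    + intros t s i; destruct (picard_integral (picard k) i IHk) as [Pr [E1 [_ [_ E4]]]].
      simpl; rewrite !E1.
      replace (x0 i + Pr (clamp t) - (x0 i + Pr (clamp s))) with (Pr (clamp t) - Pr (clamp s))
        by ring.
      eapply Rle_trans; [apply E4; apply clamp_range|].
      apply Rmult_le_compat_l; auto; apply clamp_lipschitz.
    + intros t i; destruct (picard_integral (picard k) i IHk) as [Pr [E1 [_ [E3 E4]]]].
      simpl; rewrite E1.
      replace (x0 i + Pr (clamp t) - x0 i) with (Pr (clamp t) - Pr 0) by (rewrite E3; ring).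
      eapply Rle_trans; [apply E4; [apply clamp_range|split; [lra|apply T_nonneg]]|].
      rewrite Rminus_0_r, Rabs_pos_eq by apply clamp_range; lra.
Qed.

Lemma picard_deriv k i t : 0 < t < T ->
  derivable_pt_lim (fun s => picard (S k) s i) t (F (picard k t) i).
Proof.
  intro Ht; destruct (picard_integral (picard k) i (picard_inv_all k)) as [Pr [E1 [E2 _]]].
  apply (derivable_pt_lim_locally_ext (fun s => x0 i + Pr s) _ _ 0 T); auto.
  - intros z Hz; simpl; rewrite E1, clamp_id; auto; lra.
  - eapply derivable_pt_lim_eq_val;
      [apply derivable_pt_lim_plus'; [apply derivable_pt_lim_const|apply E2; lra]|ring].
Qed.

Definition picard_c0 := K * T.
Definition picard_ratio := 6 * L * T.

Lemma picard_ratio_range : 0 <= picard_ratio <= 1 / 2.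
Proof.
  split; [|apply picard_time_L].
  unfold picard_ratio; assert (H := picard_time_pos); fold T in H; nra.
Qed.

Lemma picard_c0_nonneg : 0 <= picard_c0.
Proof. unfold picard_c0; assert (H := picard_time_pos); fold T in H; nra. Qed.

Lemma picard_step k : forall t i,
  Rabs (picard (S k) t i - picard k t i) <= picard_c0 * picard_ratio ^ k.
Proof.
  induction k; intros t i.
  - rewrite pow_O, Rmult_1_r; eapply Rle_trans; [apply (proj2 (picard_inv_all 1))|].
    apply Rmult_le_compat_l; auto; apply clamp_range.
  - destruct (picard_integral (picard (S k)) i (picard_inv_all (S k))) as [P2 [A1 [A2 [A3 _]]]].
    destruct (picard_integral (picard k) i (picard_inv_all k)) as [P1 [B1 [B2 [B3 _]]]].
    change (picard (S (S k)) t i) with (x0 i + integral0 (fun s => F (picard (S k) s) i) t).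
    change (picard (S k) t i) with (x0 i + integral0 (fun s => F (picard k s) i) t).
    rewrite A1, B1.
    replace (x0 i + P2 (clamp t) - (x0 i + P1 (clamp t))) with
      ((fun u => P2 u - P1 u) (clamp t) - (fun u => P2 u - P1 u) 0) by (rewrite A3, B3; ring).
    assert (Hc := clamp_range t); assert (Hq := picard_ratio_range);
      assert (HC := picard_c0_nonneg).
    assert (Hqk : 0 <= picard_ratio ^ k) by (apply pow_le; lra).
    eapply Rle_trans.
    + apply (MVT_abs_bound (fun u => P2 u - P1 u) (fun u => F (picard (S k) u) i - F (picard k u) i) 0 (clamp t)
               (L * (6 * (picard_c0 * picard_ratio ^ k)))); [lra| |].
      * intros x Hx; apply derivable_pt_lim_minus; [apply A2|apply B2]; lra.
      * intros x Hx; eapply Rle_trans; [apply HFl; apply picard_inv_box, picard_inv_all|].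
        apply Rmult_le_compat_l, dist1_le; auto.
    + rewrite Rminus_0_r; simpl pow; unfold picard_ratio at 2.
      apply Rle_trans with (L * (6 * (picard_c0 * picard_ratio ^ k)) * T); [|right; ring].
      apply Rmult_le_compat_l; [|lra]; apply Rmult_le_pos; [auto|nra].
Qed.

Lemma picard_cauchy n d t i : Rabs (picard (n + d) t i - picard n t i)
  <= 2 * picard_c0 * picard_ratio ^ n - 2 * picard_c0 * picard_ratio ^ (n + d).
Proof.
  induction d.
  - rewrite Nat.add_0_r; unfold Rminus; rewrite !Rplus_opp_r, Rabs_R0; lra.
  - rewrite Nat.add_succ_r.
    replace (picard (S (n + d)) t i - picard n t i) with
      ((picard (S (n + d)) t i - picard (n + d) t i) + (picard (n + d) t i - picard n t i))
      by ring.
    eapply Rle_trans; [apply Rabs_triang|].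
    assert (H1 := picard_step (n + d) t i); simpl pow.
    assert (Hq := picard_ratio_range); assert (HC := picard_c0_nonneg).
    assert (Hp : 0 <= picard_ratio ^ (n + d)) by (apply pow_le; lra).
    assert (0 <= picard_c0 * picard_ratio ^ (n + d)) by nra.
    nra.
Qed.

Lemma picard_cauchy_le n m t i : (n <= m)%nat ->
  Rabs (picard m t i - picard n t i) <= 2 * picard_c0 * picard_ratio ^ n.
Proof.
  intro H; replace m with (n + (m - n))%nat by lia.
  eapply Rle_trans; [apply picard_cauchy|].
  assert (0 <= picard_ratio ^ (n + (m - n))) by (apply pow_le, picard_ratio_range).
  assert (HC := picard_c0_nonneg); nra.
Qed.

Lemma picard_ratio_pow_small y : 0 < y -> exists N, forall n, (n >= N)%nat -> picard_ratio ^ n < y.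
Proof.
  intro Hy; assert (Hq := picard_ratio_range).
  destruct (pow_lt_1_zero picard_ratio) with y as [N HN]; auto.
  { rewrite Rabs_pos_eq; lra. }
  exists N; intros n Hn; specialize (HN n Hn); rewrite Rabs_pos_eq in HN; auto.
  apply pow_le; lra.
Qed.

Lemma picard_Cauchy_crit t i : Cauchy_crit (fun n => picard n t i).
Proof.
  intros eps He; assert (HC := picard_c0_nonneg).
  destruct (picard_ratio_pow_small (eps / (4 * picard_c0 + 1))) as [N HN];
    [apply Rdiv_lt_0_compat; lra|].
  exists N; intros n m Hn Hm; unfold Rdist.
  replace (picard n t i - picard m t i)
    with ((picard n t i - picard N t i) - (picard m t i - picard N t i)) by ring.
  eapply Rle_lt_trans; [apply Rabs_triang|]; rewrite Rabs_Ropp.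
  assert (A := picard_cauchy_le N n t i Hn); assert (B := picard_cauchy_le N m t i Hm).
  assert (Hq' : picard_c0 * picard_ratio ^ N <= picard_c0 * (eps / (4 * picard_c0 + 1)))
    by (apply Rmult_le_compat_l; [lra|apply Rlt_le, HN; lia]).
  assert (picard_c0 * (eps / (4 * picard_c0 + 1)) * 4 < eps).
  { apply Rmult_lt_reg_r with (4 * picard_c0 + 1); [lra|]; unfold Rdiv.
    replace (picard_c0 * (eps * / (4 * picard_c0 + 1)) * 4 * (4 * picard_c0 + 1))
      with (4 * picard_c0 * eps * ((4 * picard_c0 + 1) * / (4 * picard_c0 + 1))) by ring.
    rewrite Rinv_r by lra; nra. }
  lra.
Qed.

Definition picard_lim (t : R) (i : idx) : R := proj1_sig (R_complete _ (picard_Cauchy_crit t i)).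

Lemma picard_lim_cv t i : Un_cv (fun n => picard n t i) (picard_lim t i).
Proof. unfold picard_lim; destruct (R_complete _ (picard_Cauchy_crit t i)); auto. Qed.

Lemma Un_cv_dist_le (u : nat -> R) l a B n : Un_cv u l ->
  (forall m, (m >= n)%nat -> Rabs (u m - a) <= B) -> Rabs (l - a) <= B.
Proof.
  intros Hu Hb; destruct (Rle_dec (Rabs (l - a)) B) as [|Hn]; auto; exfalso.
  destruct (Hu (Rabs (l - a) - B)) as [N HN]; [lra|].
  specialize (HN (Nat.max N n) (Nat.le_max_l _ _)).
  specialize (Hb (Nat.max N n) (Nat.le_max_r _ _)); unfold Rdist in HN.
  assert (Rabs (l - a) <= Rabs (u (Nat.max N n) - l) + Rabs (u (Nat.max N n) - a)).
  { replace (l - a) with (- (u (Nat.max N n) - l) + (u (Nat.max N n) - a)) by ring.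
    eapply Rle_trans; [apply Rabs_triang|]; rewrite Rabs_Ropp; lra. }
  lra.
Qed.

Lemma picard_lim_near n t i :
  Rabs (picard_lim t i - picard n t i) <= 2 * picard_c0 * picard_ratio ^ n.
Proof. apply (Un_cv_dist_le _ _ _ _ n (picard_lim_cv t i)); intros m Hm; apply picard_cauchy_le; auto. Qed.

Lemma picard_lim_start t i : Rabs (picard_lim t i - x0 i) <= K * clamp t.
Proof.
  apply (Un_cv_dist_le _ _ _ _ 0 (picard_lim_cv t i)); intros m _.
  apply (proj2 (picard_inv_all m)).
Qed.

Lemma picard_lim_box t : box x0 r (picard_lim t).
Proof.
  intro i; eapply Rle_trans; [apply picard_lim_start|]; assert (Hc := clamp_range t).
  apply Rle_trans with (K * T); [apply Rmult_le_compat_l; lra|apply picard_time_K].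
Qed.

Lemma picard_lim_deriv t i : 0 < t < T ->
  derivable_pt_lim (fun s => picard_lim s i) t (F (picard_lim t) i).
Proof.
  intro Ht; assert (Hh := picard_time_pos); fold T in Hh.
  set (d := mkposreal (T / 2) ltac:(lra)).
  apply (CVU_derivable (fun n s => picard (S n) s i) (fun n s => F (picard n s) i)
           (fun s => picard_lim s i) (fun s => F (picard_lim s) i) (T / 2) d).
  - intros eps He; assert (HC := picard_c0_nonneg); assert (Hq := picard_ratio_range).
    set (X := 12 * L * picard_c0); assert (HX : 0 <= X) by (unfold X; nra).
    destruct (picard_ratio_pow_small (eps / (X + 1))) as [N HN];
      [apply Rdiv_lt_0_compat; lra|].
    exists N; intros n y Hn _.
    eapply Rle_lt_trans;
      [apply HFl; [apply picard_lim_box|apply picard_inv_box, picard_inv_all]|].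
    apply Rle_lt_trans with (L * (6 * (2 * picard_c0 * picard_ratio ^ n))).
    + apply Rmult_le_compat_l, dist1_le; auto; intro j; apply picard_lim_near.
    + specialize (HN n Hn); assert (Hqn : 0 <= picard_ratio ^ n) by (apply pow_le; lra).
      replace (L * (6 * (2 * picard_c0 * picard_ratio ^ n))) with (X * picard_ratio ^ n)
        by (unfold X; ring).
      apply Rle_lt_trans with (X * (eps / (X + 1))); [apply Rmult_le_compat_l; lra|].
      apply Rmult_lt_reg_r with (X + 1); [lra|]; unfold Rdiv.
      replace (X * (eps * / (X + 1)) * (X + 1)) with (X * eps * ((X + 1) * / (X + 1)))
        by ring.
      rewrite Rinv_r by lra; nra.
  - intros x _ eps He; destruct (picard_lim_cv x i eps He) as [N HN]; exists N.
    intros n Hn; apply HN; lia.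
  - intros n x Hx; unfold Boule in Hx; simpl in Hx; apply Rabs_def2 in Hx.
    apply picard_deriv; lra.
  - unfold Boule; simpl; apply Rabs_def1; lra.
Qed.
End Picard.

Theorem ode_local_existence (F : State -> idx -> R) (x0 : State) (r K L : R) :
  0 < r -> 0 <= K -> 0 <= L ->
  (forall x, box x0 r x -> forall i, Rabs (F x i) <= K) ->
  (forall x y, box x0 r x -> box x0 r y -> forall i, Rabs (F x i - F y i) <= L * dist1 x y) ->
  exists h (X : R -> State), 0 < h /\
    (forall t, 0 < t < h -> forall i, derivable_pt_lim (fun s => X s i) t (F (X t) i)) /\
    (forall t, box x0 r (X t)) /\
    (forall t i, 0 <= t -> Rabs (X t i - x0 i) <= K * t).
Proof.
  intros Hr HK HL HFb HFl.
  exists (picard_time r K L), (picard_lim F x0 r K L Hr HK HL HFb HFl).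
  split; [apply picard_time_pos; auto|split; [|split]].
  - intros t Ht i; apply picard_lim_deriv; auto.
  - intro t; apply picard_lim_box.
  - intros t i Ht; eapply Rle_trans; [apply picard_lim_start|].
    apply Rmult_le_compat_l; auto.
    destruct (clamp_cases r K L Hr HK HL t) as [[A B]|[[A B]|[A B]]]; rewrite B; lra.
Qed.

Definition tSub (a b : term) := tAdd a (tMul (tConst (-1)) b).
Definition tSq (e : term) := tMul e e.
Definition tCube (e : term) := tMul e (tMul e e).

Section DataTerms.
Variables (c N n n1 n2 a1 a2 eps : R).

Definition g1 := tVar G1.
Definition g2 := tVar G2.
Definition g3 := tVar G3.

Definition mu1_term : term := tMul (tConst c)
  (tAdd (tAdd (tAdd (tAdd (tAdd (tMul (tConst (- n)) g1) (tMul (tConst (- n1)) (tSq g1)))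
       (tMul (tConst (2 * n1)) (tSq g2))) (tMul (tConst n1) (tSq g3)))
       (tMul (tConst (- 3 * n2)) (tMul g1 g2))) (tMul (tConst N) (tMul g1 (tCube tInvRho)))).

Definition mu2_term : term := tMul (tConst c)
  (tAdd (tAdd (tAdd (tAdd (tAdd (tMul (tConst (- n)) g2) (tMul (tConst (2 * n2)) (tSq g1)))
       (tMul (tConst (- n2)) (tSq g2))) (tMul (tConst n2) (tSq g3)))
       (tMul (tConst (- 3 * n1)) (tMul g1 g2))) (tMul (tConst N) (tMul g2 (tCube tInvRho)))).

Definition mu3_term : term := tMul (tConst (- c)) (tMul g3
  (tAdd (tAdd (tAdd (tConst (3 * n)) (tMul (tConst (5 * n1)) g1)) (tMul (tConst (5 * n2)) g2))
       (tMul (tConst N) (tMul g3 tInvRho)))).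

Definition mu3'_term : term := tMul (tConst (- c)) (tMul g3
  (tAdd (tAdd (tAdd (tConst (3 * n)) (tMul (tConst (5 * n1)) g1)) (tMul (tConst (5 * n2)) g2))
       (tMul (tConst (- N)) (tMul (tAdd (tSq g3) (tConst 1)) (tCube tInvRho))))).

Definition quadI_term : term :=
  tAdd (tAdd (tMul (tConst 2) (tSq g1)) (tMul (tConst 2) (tSq g2))) (tSq g3).

Definition coef_term : term :=
  tAdd (tAdd (tAdd (tConst n) (tMul (tConst n1) g1)) (tMul (tConst n2) g2))
       (tMul (tConst N) tInvRho).

Definition phi_term : term := tMul (tConst c) (tMul coef_term quadI_term).

Definition I2_term : term :=
  tAdd (tAdd (tAdd (tMul (tVar M1) g1) (tMul (tVar M2) g2)) (tMul (tVar M3) g3)) phi_term.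

Definition U_term : term :=
  tAdd (tAdd (tMul (tConst c) (tAdd (tMul (tConst a1) g1) (tMul (tConst a2) g2)))
             (tMul (tConst eps) tInvRho))
       (tMul (tConst (- 1 / 2 * c)) (tMul (tSq coef_term) quadI_term)).

Lemma mu1_eval : mu1 c N n n1 n2 = eval mu1_term.
Proof.
  apply functional_extensionality; intro p; unfold mu1; cbv zeta.
  unfold Rdiv; rewrite <- pow_inv; simpl; ring.
Qed.

Lemma mu2_eval : mu2 c N n n1 n2 = eval mu2_term.
Proof.
  apply functional_extensionality; intro p; unfold mu2; cbv zeta.
  unfold Rdiv; rewrite <- pow_inv; simpl; ring.
Qed.

Lemma mu3_eval : mu3 c N n n1 n2 = eval mu3_term.
Proof. apply functional_extensionality; intro p; unfold mu3; simpl; unfold Rdiv; ring. Qed.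

Lemma mu3'_eval : mu3' c N n n1 n2 = eval mu3'_term.
Proof.
  apply functional_extensionality; intro p; unfold mu3'; cbv zeta.
  unfold Rdiv; rewrite <- pow_inv; simpl; ring.
Qed.

Lemma phi_eval : phi c N n n1 n2 = eval phi_term.
Proof. apply functional_extensionality; intro p; unfold phi, quadI; simpl; unfold Rdiv; ring. Qed.

Lemma I2_eval : I2 c N n n1 n2 = eval I2_term.
Proof. apply functional_extensionality; intro p; unfold I2, quadI; simpl; unfold Rdiv; ring. Qed.

Lemma Ufun_eval : Ufun c N n n1 n2 a1 a2 eps = eval U_term.
Proof. apply functional_extensionality; intro p; unfold Ufun, quadI; simpl; unfold Rdiv; ring. Qed.

(* Identities between rational functions of the coordinates and [rho]: name [rho] and
   [/ rho], and let [nsatz] use [rho^2 = g1^2 + g2^2] and [rho * / rho = 1]. *)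
Ltac rho_nsatz p HD :=
  let Hr := fresh "Hr" in let Hr2 := fresh "Hr2" in let Hs := fresh "Hs" in
  assert (Hr := rho_pos p HD); assert (Hr2 := rho_sq p); simpl in Hr2;
  rewrite ?Rmult_1_r in Hr2; set (r := rho p) in *; unfold Rdiv;
  rewrite ?Rinv_mult, ?Rinv_1;
  assert (Hs : r * / r = 1) by (field; lra); set (s := / r) in *; nsatz.

Lemma phi_partial_G1 p : inD p ->
  eval (dterm phi_term G1) p = mu1 c N n n1 n2 p - psi c N n n1 n2 p * p G1.
Proof. intro HD; unfold mu1, psi; simpl; rho_nsatz p HD. Qed.

Lemma phi_partial_G2 p : inD p ->
  eval (dterm phi_term G2) p = mu2 c N n n1 n2 p - psi c N n n1 n2 p * p G2.
Proof. intro HD; unfold mu2, psi; simpl; rho_nsatz p HD. Qed.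

Lemma phi_partial_G3 p : inD p ->
  eval (dterm phi_term G3) p = mu3' c N n n1 n2 p - psi c N n n1 n2 p * p G3.
Proof. intro HD; unfold mu3', psi; simpl; rho_nsatz p HD. Qed.

Lemma Pi_mu'_grad_I2 p i : inD p ->
  sum6 (fun j => Pi (mu1 c N n n1 n2) (mu2 c N n n1 n2) (mu3' c N n n1 n2) p i j
                 * eval (dterm I2_term j) p) = 0.
Proof.
  intro HD; rewrite mu1_eval, mu2_eval, mu3'_eval; unfold sum6, Pi.
  destruct i; simpl; rho_nsatz p HD.
Qed.

Lemma mu'_indep_of_M p :
  indep_of_M mu1_term p /\ indep_of_M mu2_term p /\ indep_of_M mu3'_term p.
Proof. unfold indep_of_M, mu1_term, mu2_term, mu3'_term; simpl; repeat split; ring. Qed.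

Lemma mu'_gamma_dot_curl p : gamma_dot_curl mu1_term mu2_term mu3'_term p = 0.
Proof. unfold gamma_dot_curl, mu1_term, mu2_term, mu3'_term; simpl; ring. Qed.

End DataTerms.

Section FieldTerm.
Variables (c N n n1 n2 a1 a2 eps : R).

Definition field_term (i : idx) : term :=
  let w1 := tMul (tVar M1) (tConst (/ (2 * c))) in
  let w2 := tMul (tVar M2) (tConst (/ (2 * c))) in
  let w3 := tMul (tVar M3) (tConst (/ c)) in
  let b1 := tAdd (tVar M1) (mu1_term c N n n1 n2) in
  let b2 := tAdd (tVar M2) (mu2_term c N n n1 n2) in
  let b3 := tAdd (tVar M3) (mu3_term c N n n1 n2) in
  let u1 := dterm (U_term c N n n1 n2 a1 a2 eps) G1 in
  let u2 := dterm (U_term c N n n1 n2 a1 a2 eps) G2 in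
  let u3 := dterm (U_term c N n n1 n2 a1 a2 eps) G3 in
  match i with
  | M1 => tSub (tSub (tMul g2 u3) (tMul g3 u2)) (tSub (tMul w2 b3) (tMul w3 b2))
  | M2 => tSub (tSub (tMul g3 u1) (tMul g1 u3)) (tSub (tMul w3 b1) (tMul w1 b3))
  | M3 => tSub (tSub (tMul g1 u2) (tMul g2 u1)) (tSub (tMul w1 b2) (tMul w2 b1))
  | G1 => tSub (tMul g2 w3) (tMul g3 w2)
  | G2 => tSub (tMul g3 w1) (tMul g1 w3)
  | G3 => tSub (tMul g1 w2) (tMul g2 w1)
  end.

Lemma field_eval (gU1 gU2 gU3 : State -> R) :
  (forall p, inD p ->
     partial (Ufun c N n n1 n2 a1 a2 eps) G1 p (gU1 p) /\
     partial (Ufun c N n n1 n2 a1 a2 eps) G2 p (gU2 p) /\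
     partial (Ufun c N n n1 n2 a1 a2 eps) G3 p (gU3 p)) ->
  forall p, inD p -> forall i, field c N n n1 n2 gU1 gU2 gU3 p i = eval (field_term i) p.
Proof.
  intros HU p Hp i; destruct (HU p Hp) as (U1 & U2 & U3); rewrite Ufun_eval in U1, U2, U3.
  unfold field; rewrite mu1_eval, mu2_eval, mu3_eval,
    (partial_unique _ _ _ _ _ U1 (partial_eval _ p G1 Hp)),
    (partial_unique _ _ _ _ _ U2 (partial_eval _ p G2 Hp)),
    (partial_unique _ _ _ _ _ U3 (partial_eval _ p G3 Hp)).
  destruct i; unfold field_term, tSub, g1, g2, g3; cbv zeta; cbn [eval]; unfold Rdiv; ring.
Qed.

Definition dI2_term : term :=
  let d i := tMul (dterm (I2_term c N n n1 n2) i) (field_term i) in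
  tAdd (tAdd (tAdd (tAdd (tAdd (d M1) (d M2)) (d M3)) (d G1)) (d G2)) (d G3).

Definition x_witness : State := fun j => match j with M2 | G1 | G3 => 1 | _ => 0 end.

Lemma rho_x_witness : rho x_witness = 1.
Proof. unfold rho, x_witness; simpl; transitivity (sqrt 1); [f_equal; ring|apply sqrt_1]. Qed.

Lemma dI2_x_witness : c <> 0 -> eval dI2_term x_witness = 3 * N / 2.
Proof.
  intro Hc; unfold dI2_term, field_term, tSub, g1, g2, g3, I2_term, phi_term, coef_term,
    quadI_term, U_term, mu1_term, mu2_term, mu3_term, tSq, tCube.
  cbn [eval dterm idx_eqb]; rewrite rho_x_witness; unfold x_witness; cbn.
  field; split; [auto|change (rho x_witness <> 0); rewrite rho_x_witness; lra].
Qed.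
End FieldTerm.

Section PartA.
Variables (c N n n1 n2 a1 a2 eps : R) (gU1 gU2 gU3 : State -> R).
Hypothesis HU : forall p, inD p ->
  partial (Ufun c N n n1 n2 a1 a2 eps) G1 p (gU1 p) /\
  partial (Ufun c N n n1 n2 a1 a2 eps) G2 p (gU2 p) /\
  partial (Ufun c N n n1 n2 a1 a2 eps) G3 p (gU3 p).

Let Fd := field c N n n1 n2 gU1 gU2 gU3.

Lemma I2_derivative_along_solution a b X t : is_solution Fd inD a b X -> a < t < b ->
  derivable_pt_lim (fun s => I2 c N n n1 n2 (X s)) t
    (eval (dI2_term c N n n1 n2 a1 a2 eps) (X t)).
Proof.
  intros [_ HX] Ht; destruct (HX t Ht) as [HD Hd].
  rewrite I2_eval; eapply derivable_pt_lim_eq_val; [apply (eval_chain _ X t _ HD Hd)|].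
  unfold sum6; rewrite !(field_eval c N n n1 n2 a1 a2 eps gU1 gU2 gU3 HU _ HD); reflexivity.
Qed.

Lemma solution_from_x_witness : exists h X K, 0 < h /\ 0 <= K /\ is_solution Fd inD 0 h X /\
  forall t i, 0 <= t -> Rabs (X t i - x_witness i) <= K * t.
Proof.
  assert (Hr0 : 0 < rho x_witness) by (rewrite rho_x_witness; lra).
  assert (Hr4 : 4 * (1 / 4) <= rho x_witness) by (rewrite rho_x_witness; lra).
  destruct (eval_family_bounded_lipschitz (field_term c N n n1 n2 a1 a2 eps) x_witness (1 / 4)
              Hr0 ltac:(lra) Hr4) as (K & L & HK & HL & HB).
  assert (Hin : forall q, box x_witness (1 / 4) q -> inD q).
  { intros q Hq; apply (box_inD x_witness (1 / 4)); auto.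
    unfold inD, x_witness; simpl; lra. }
  assert (HFe : forall q, box x_witness (1 / 4) q -> forall i,
            Fd q i = eval (field_term c N n n1 n2 a1 a2 eps i) q)
    by (intros q Hq i; apply field_eval; auto).
  destruct (ode_local_existence Fd x_witness (1 / 4) K L ltac:(lra) HK HL)
    as (h & X & Hh & Hd & Hb & Hn).
  - intros x Hx i; rewrite HFe by auto; apply (HB x x Hx Hx i).
  - intros x y Hx Hy i; rewrite !HFe by auto; apply (HB x y Hx Hy i).
  - exists h, X, K; repeat split; auto.
Qed.

Theorem I2_not_constant_of_motion : c > 0 -> N <> 0 ->
  ~ constant_of_motion Fd inD (I2 c N n n1 n2).
Proof.
  intros hc HN Hcm.
  destruct solution_from_x_witness as (h & X & K & Hh & HK & Hsol & Hnear).
  set (dI2 := eval (dI2_term c N n n1 n2 a1 a2 eps)).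
  assert (dI2_zero : forall t, 0 < t < h -> dI2 (X t) = 0).
  { intros t Ht; eapply uniqueness_limite; [apply (I2_derivative_along_solution 0 h); auto|].
    apply (derivable_pt_lim_locally_ext (fun _ => I2 c N n n1 n2 (X t)) _ t 0 h); [lra| |].
    - intros z Hz; apply Hcm with (a := 0) (b := h); auto.
    - apply derivable_pt_lim_const. }
  (* [dI2] is continuous, with value [3 N / 2] at the initial point *)
  assert (HN' : 0 < Rabs (3 * N / 2)) by (apply Rabs_pos_lt; lra).
  assert (Hx : inD x_witness) by (unfold inD, x_witness; simpl; lra).
  destruct (cont_on_eval (dI2_term c N n n1 n2 a1 a2 eps) x_witness Hx _ HN') as [d [Hd Hcont]].
  set (t := Rmin (h / 2) (d / (K + 1))).
  assert (Ht1 : t <= h / 2) by apply Rmin_l.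
  assert (Ht2 : t <= d / (K + 1)) by apply Rmin_r.
  assert (Ht0 : 0 < t) by (apply Rmin_pos; [lra|apply Rdiv_lt_0_compat; lra]).
  assert (Kt : K * t < d).
  { apply Rle_lt_trans with (K * (d / (K + 1))); [apply Rmult_le_compat_l; lra|].
    replace (K * (d / (K + 1))) with (d * (K / (K + 1))) by (field; lra).
    assert (K / (K + 1) < 1).
    { apply Rmult_lt_reg_r with (K + 1); [lra|].
      replace (K / (K + 1) * (K + 1)) with K by (field; lra); lra. }
    nra. }
  assert (Hclose := Hcont (X t) (proj1 (proj2 Hsol t ltac:(lra)))
                      (fun i => Rle_lt_trans _ _ _ (Hnear t i ltac:(lra)) Kt)).
  fold dI2 in Hclose; rewrite dI2_zero in Hclose by lra.
  unfold dI2 in Hclose; rewrite dI2_x_witness in Hclose by lra.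
  rewrite Rminus_0_l, Rabs_Ropp in Hclose; lra.
Qed.
End PartA.

Theorem mainTheorem10 (c N n n1 n2 a1 a2 eps : R) (hc : c > 0) :
  (* (a) *)
  (N <> 0 ->
   forall gU1 gU2 gU3 : State -> R,
     (forall p, inD p ->
        partial (Ufun c N n n1 n2 a1 a2 eps) G1 p (gU1 p) /\
        partial (Ufun c N n n1 n2 a1 a2 eps) G2 p (gU2 p) /\
        partial (Ufun c N n n1 n2 a1 a2 eps) G3 p (gU3 p)) ->
     ~ constant_of_motion (field c N n n1 n2 gU1 gU2 gU3) inD (I2 c N n n1 n2))
  /\
  (* (b) *)
  ((forall p, inD p ->
      partial (phi c N n n1 n2) G1 p (mu1 c N n n1 n2 p - psi c N n n1 n2 p * p G1) /\
      partial (phi c N n n1 n2) G2 p (mu2 c N n n1 n2 p - psi c N n n1 n2 p * p G2) /\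
      partial (phi c N n n1 n2) G3 p (mu3' c N n n1 n2 p - psi c N n n1 n2 p * p G3))
   /\ poisson_on inD (Pi (mu1 c N n n1 n2) (mu2 c N n n1 n2) (mu3' c N n n1 n2))
   /\ is_casimir inD (Pi (mu1 c N n n1 n2) (mu2 c N n n1 n2) (mu3' c N n n1 n2))
                 (I2 c N n n1 n2)).
Proof.
  split; [|split; [|split]].
  - intros HN gU1 gU2 gU3 HU; exact (I2_not_constant_of_motion _ _ _ _ _ _ _ _ _ _ _ HU hc HN).
  - intros p Hp; rewrite phi_eval.
    rewrite <- phi_partial_G1, <- phi_partial_G2, <- phi_partial_G3 by auto.
    repeat split; apply partial_eval; auto.
  - rewrite mu1_eval, mu2_eval, mu3'_eval.
    apply poisson_on_Pi; intros; [apply mu'_indep_of_M|apply mu'_gamma_dot_curl].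
  - rewrite I2_eval; split; [apply smooth_eval|].
    intros dC HdC p Hp i; rewrite <- (Pi_mu'_grad_I2 c N n n1 n2 p i Hp).
    apply sum6_ext; intro j; f_equal; eapply partial_unique; [apply HdC|apply partial_eval]; auto.
Qed.
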